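(* Let $N\ge1$, $T>0$, $\sigma>0$, $\lambda>0$, $\kappa>0$, let the cost function be $g(z)=\kappa z$, and let all $N$ players be risk neutral with claims $H^j\in\mathcal{C}^2_b(\mathbb{R})$ satisfying $\sum_{i=1}^N H^i=0$. Let $(v^1,\dots,v^N)$ be the classical solution of $$0=v^j_t+\tfrac12\sigma^2v^j_{pp}+\lambda\dot X^*\,v^j_p-\kappa\,\dot X^j\,\dot X^*,\qquad v^j(T,p)=H^j(p),\quad j=1,\dots,N,$$ with equilibrium trading speeds $\dot X^j=\frac{\lambda}{\kappa}\Big(v^j_p-\frac{1}{N+1}\sum_{i=1}^Nv^i_p\Big)$ and $\dot X^*=\sum_{i=1}^N\dot X^i=\frac{\lambda}{\kappa(N+1)}\sum_{i=1}^Nv^i_p$. Then the aggregate equilibrium trading speed vanishes identically: $\sum_{i=1}^N\dot X^i\equiv0$.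
   Context: Setting: players $j=1,\dots,N$ hold cash-settled claims $H^j(P_T)$ on a stock with price $dP_t=\sigma dB_t+\lambda\sum_i\dot X^i_t dt$, where $X^i$ is player $i$'s (absolutely continuous) holding with $X^i_0=0$, and player $j$ maximizes $\mathbb{E}[-\int_0^T\dot X^j_t\,g(\sum_i\dot X^i_t)dt+H^j(P_T)]$. The functions $v^j$ are the players' value functions and the formulas for $\dot X^j$ give the Nash equilibrium feedback trading speeds. $\mathcal{C}^2_b$ denotes functions bounded together with derivatives up to order 2. *)

From Stdlib Require Import Reals.
From Coquelicot Require Import Coquelicot.
Open Scope R_scope.

(* sumN N f = f 0 + ... + f (N-1)  (players are indexed by 0..N-1) *)
Fixpoint sumN (N : nat) (f : nat -> R) : R :=
  match N with
  | O => 0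
  | S n => sumN n f + f n
  end.

Definition cont_on_strip (T : R) (f : R -> R -> R) : Prop :=
  forall t p, 0 <= t <= T ->
  forall eps, 0 < eps -> exists delta, 0 < delta /\
    forall t' p', 0 <= t' <= T -> Rabs (t' - t) < delta -> Rabs (p' - p) < delta ->
      Rabs (f t' p' - f t p) < eps.

Definition cont_on_open_strip (T : R) (f : R -> R -> R) : Prop :=
  forall t p, 0 < t < T ->
  forall eps, 0 < eps -> exists delta, 0 < delta /\
    forall t' p', 0 < t' < T -> Rabs (t' - t) < delta -> Rabs (p' - p) < delta ->
      Rabs (f t' p' - f t p) < eps.

Definition bounded_on_strip (T : R) (f : R -> R -> R) : Prop :=
  exists M, forall t p, 0 <= t <= T -> Rabs (f t p) <= M.

Definition C2b (H : R -> R) : Prop :=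
  exists H1 H2 : R -> R,
    (forall p, is_derive H p (H1 p)) /\
    (forall p, is_derive H1 p (H2 p)) /\
    (forall p, continuous H2 p) /\
    (exists M, forall p, Rabs (H p) <= M /\ Rabs (H1 p) <= M /\ Rabs (H2 p) <= M).

Definition Xdot (N : nat) (lam kap : R) (vp : nat -> R -> R -> R)
    (j : nat) (t p : R) : R :=
  lam / kap * (vp j t p - / (INR N + 1) * sumN N (fun i => vp i t p)).

Definition Xstar (N : nat) (lam kap : R) (vp : nat -> R -> R -> R) (t p : R) : R :=
  sumN N (fun i => Xdot N lam kap vp i t p).

Definition classical_solution (N : nat) (T sigma lam kap : R)
    (H : nat -> R -> R)
    (v vt vp vpp : nat -> R -> R -> R) : Prop :=
  forall j, (j < N)%nat ->
    (forall t p, 0 < t < T -> is_derive (fun s => v j s p) t (vt j t p)) /\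
    (forall t p, 0 <= t <= T -> is_derive (fun q => v j t q) p (vp j t p)) /\
    (forall t p, 0 <= t <= T -> is_derive (fun q => vp j t q) p (vpp j t p)) /\
    cont_on_strip T (v j) /\ cont_on_strip T (vp j) /\ cont_on_strip T (vpp j) /\
    cont_on_open_strip T (vt j) /\
    bounded_on_strip T (v j) /\ bounded_on_strip T (vp j) /\
    (forall p, v j T p = H j p) /\
    (forall t p, 0 < t < T ->
       0 = vt j t p + / 2 * sigma ^ 2 * vpp j t p
           + lam * Xstar N lam kap vp t p * vp j t p
           - kap * Xdot N lam kap vp j t p * Xstar N lam kap vp t p).

From Stdlib Require Import Reals Lra Lia Psatz Classical ClassicalEpsilon.
From Coquelicot Require Import Coquelicot.
Open Scope R_scope.

(* Summing the N equations and using sum_i dX^i = lam/(kap(N+1)) S_p, the total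
   value S = sum_i v^i solves S_t + 1/2 sigma^2 S_pp + alpha S_p^2 = 0 with
   alpha = lam^2 N / (kap (N+1)^2) >= 0 and S(T, .) = sum_i H^i = 0.  Both S and
   -S are then bounded subsolutions of such an equation with zero terminal data,
   so the maximum principle gives S = 0; hence S_p = 0 and the aggregate speed
   vanishes.  For the maximum principle: if W > 0 somewhere, the penalized
   function W - eps p^2 - B (T - t) attains a positive maximum at an interior
   time, where the first- and second-order conditions contradict the
   subsolution inequality. *)

Lemma sumN_ext N f g : (forall i, (i < N)%nat -> f i = g i) -> sumN N f = sumN N g.
Proof.
  induction N as [|N IH]; intros Hfg; simpl; auto.
  rewrite IH by (intros; apply Hfg; lia). rewrite Hfg by lia. reflexivity.
Qed.

Lemma sumN_plus N f g : sumN N (fun i => f i + g i) = sumN N f + sumN N g.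
Proof. induction N as [|N IH]; simpl; [ring | rewrite IH; ring]. Qed.

Lemma sumN_minus N f g : sumN N (fun i => f i - g i) = sumN N f - sumN N g.
Proof. induction N as [|N IH]; simpl; [ring | rewrite IH; ring]. Qed.

Lemma sumN_scal_r N c f : sumN N (fun i => f i * c) = sumN N f * c.
Proof. induction N as [|N IH]; simpl; [ring | rewrite IH; ring]. Qed.

Lemma sumN_scal_l N c f : sumN N (fun i => c * f i) = c * sumN N f.
Proof. induction N as [|N IH]; simpl; [ring | rewrite IH; ring]. Qed.

Lemma sumN_const N c : sumN N (fun _ => c) = INR N * c.
Proof. induction N as [|N IH]; simpl sumN; [simpl; ring | rewrite IH, S_INR; ring]. Qed.

Lemma is_derive_sumN N (F : nat -> R -> R) (dF : nat -> R) x :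
  (forall i, (i < N)%nat -> is_derive (F i) x (dF i)) ->
  is_derive (fun y => sumN N (fun i => F i y)) x (sumN N dF).
Proof.
  induction N as [|N IH]; intros HF; simpl.
  - exact (is_derive_const (K:=R_AbsRing) (V:=R_NormedModule) 0 x).
  - apply (is_derive_plus (fun y => sumN N (fun i => F i y)) (F N)).
    + apply IH; intros; apply HF; lia.
    + apply HF; lia.
Qed.

Lemma is_derive_le0_of_right_max f x l d : is_derive f x l -> 0 < d ->
  (forall h, 0 < h < d -> f (x + h) <= f x) -> l <= 0.
Proof.
  intros Hl Hd Hmax; apply is_derive_Reals in Hl.
  apply Rnot_lt_le; intros Hpos.
  destruct (Hl l Hpos) as [del Hdel].
  set (h := Rmin (del / 2) (d / 2)).
  assert (Hh : 0 < h < del /\ h < d).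
  { pose proof (cond_pos del); pose proof (Rmin_l (del / 2) (d / 2));
      pose proof (Rmin_r (del / 2) (d / 2)).
    assert (0 < h) by (apply Rmin_pos; lra). unfold h in *; lra. }
  assert (Hq := Hdel h ltac:(lra) ltac:(rewrite Rabs_pos_eq; lra)).
  apply Rabs_def2 in Hq.
  assert (Hquot : 0 < (f (x + h) - f x) / h) by lra.
  assert (E : (f (x + h) - f x) / h * h = f (x + h) - f x) by (field; lra).
  specialize (Hmax h ltac:(lra)). nra.
Qed.

Lemma is_derive_eq0_of_max f x l : is_derive f x l -> (forall y, f y <= f x) -> l = 0.
Proof.
  intros Hl Hmax.
  pose (pr := exist _ l (proj1 (is_derive_Reals f x l) Hl) : derivable_pt f x).
  apply (deriv_maximum f (x - 1) (x + 1) x pr); [lra | lra |].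
  intros; apply Hmax.
Qed.

Lemma is_derive2_le0_of_max f f' x l : (forall y, is_derive f y (f' y)) ->
  is_derive f' x l -> (forall y, f y <= f x) -> l <= 0.
Proof.
  intros Hf Hl Hmax.
  pose proof (is_derive_eq0_of_max f x (f' x) (Hf x) Hmax) as Hf'x.
  apply is_derive_Reals in Hl.
  apply Rnot_lt_le; intros Hpos.
  destruct (Hl l Hpos) as [del Hdel].
  assert (Hf'pos : forall h, 0 < h < del -> 0 < f' (x + h)).
  { intros h Hh.
    assert (Hq := Hdel h ltac:(lra) ltac:(rewrite Rabs_pos_eq; lra)).
    apply Rabs_def2 in Hq; rewrite Hf'x in Hq.
    assert (E : (f' (x + h) - 0) / h * h = f' (x + h)) by (field; lra).
    assert (0 < (f' (x + h) - 0) / h) by lra. nra. }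
  pose proof (cond_pos del).
  destruct (MVT_cor2 f f' x (x + del / 2) ltac:(lra)
              (fun c _ => proj1 (is_derive_Reals _ _ _) (Hf c))) as [c [E Hc]].
  assert (0 < f' c) by (replace c with (x + (c - x)) by ring; apply Hf'pos; lra).
  specialize (Hmax (x + del / 2)). nra.
Qed.

(* [cont_on_strip T f] is convertible to [continuous_on_band 0 T f]. *)
Definition continuous_on_band (a b : R) (f : R -> R -> R) : Prop :=
  forall t p, a <= t <= b ->
  forall eps, 0 < eps -> exists delta, 0 < delta /\
    forall t' p', a <= t' <= b -> Rabs (t' - t) < delta -> Rabs (p' - p) < delta ->
      Rabs (f t' p' - f t p) < eps.

Lemma continuous_on_band_sub a b a' b' f : a <= a' -> b' <= b ->
  continuous_on_band a b f -> continuous_on_band a' b' f.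
Proof.
  intros Ha Hb Hf t p Ht eps Heps.
  destruct (Hf t p ltac:(lra) eps Heps) as [d [Hd Hfd]].
  exists d; split; [exact Hd |]. intros t' p' Ht'; apply Hfd; lra.
Qed.

Lemma continuous_on_band_plus a b f g : continuous_on_band a b f ->
  continuous_on_band a b g -> continuous_on_band a b (fun t p => f t p + g t p).
Proof.
  intros Hf Hg t p Ht eps Heps.
  destruct (Hf t p Ht (eps / 2) ltac:(lra)) as [d1 [Hd1 Hf1]].
  destruct (Hg t p Ht (eps / 2) ltac:(lra)) as [d2 [Hd2 Hg2]].
  exists (Rmin d1 d2); split; [apply Rmin_pos; assumption |].
  intros t' p' Ht' Hdt Hdp.
  pose proof (Rmin_l d1 d2); pose proof (Rmin_r d1 d2).
  specialize (Hf1 t' p' Ht' ltac:(lra) ltac:(lra)).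
  specialize (Hg2 t' p' Ht' ltac:(lra) ltac:(lra)).
  replace (f t' p' + g t' p' - (f t p + g t p))
    with ((f t' p' - f t p) + (g t' p' - g t p)) by ring.
  eapply Rle_lt_trans; [apply Rabs_triang | lra].
Qed.

Lemma continuous_on_band_opp a b f : continuous_on_band a b f ->
  continuous_on_band a b (fun t p => - f t p).
Proof.
  intros Hf t p Ht eps Heps.
  destruct (Hf t p Ht eps Heps) as [d [Hd Hfd]].
  exists d; split; [exact Hd |]. intros t' p' Ht' Hdt Hdp.
  rewrite <- Rabs_Ropp. replace (- (- f t' p' - - f t p)) with (f t' p' - f t p) by ring.
  auto.
Qed.

Lemma continuous_eps_delta g x : continuous g x ->
  forall eps, 0 < eps -> exists delta, 0 < delta /\
    forall y, Rabs (y - x) < delta -> Rabs (g y - g x) < eps.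
Proof.
  intros Hg eps Heps. apply continuity_pt_filterlim in Hg.
  destruct (Hg eps Heps) as [d [Hd Hgd]].
  exists d; split; [exact Hd |]. intros y Hy.
  destruct (Req_dec y x) as [-> | Hyx].
  - rewrite Rminus_diag, Rabs_R0; exact Heps.
  - apply (Hgd y); repeat split; [exact (not_eq_sym Hyx) | exact Hy].
Qed.

Lemma continuous_on_band_sep a b (g h : R -> R) :
  (forall t, continuous g t) -> (forall p, continuous h p) ->
  continuous_on_band a b (fun t p => g t + h p).
Proof.
  intros Hg Hh t p _ eps Heps.
  destruct (continuous_eps_delta g t (Hg t) (eps / 2) ltac:(lra)) as [d1 [Hd1 Hg1]].
  destruct (continuous_eps_delta h p (Hh p) (eps / 2) ltac:(lra)) as [d2 [Hd2 Hh2]].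
  exists (Rmin d1 d2); split; [apply Rmin_pos; assumption |].
  intros t' p' _ Hdt Hdp.
  pose proof (Rmin_l d1 d2); pose proof (Rmin_r d1 d2).
  specialize (Hg1 t' ltac:(lra)); specialize (Hh2 p' ltac:(lra)).
  replace (g t' + h p' - (g t + h p)) with ((g t' - g t) + (h p' - h p)) by ring.
  eapply Rle_lt_trans; [apply Rabs_triang | lra].
Qed.

Lemma band_rectangle_attains_max (f : R -> R -> R) a b c d :
  a <= b -> c <= d -> continuous_on_band a b f ->
  (exists M, forall t p, a <= t <= b -> c <= p <= d -> f t p <= M) ->
  exists ts ps, a <= ts <= b /\ c <= ps <= d /\
    forall t p, a <= t <= b -> c <= p <= d -> f t p <= f ts ps.
Proof.
  intros Hab Hcd Hf [M HM].
  set (E := fun y => exists t p, a <= t <= b /\ c <= p <= d /\ y = f t p).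
  destruct (completeness E) as [m [Hub Hlub]].
  { exists M. intros y (t & p & Ht & Hp & ->). auto. }
  { exists (f a c), a, c. repeat split; lra. }
  apply NNPP; intros Hnomax.
  assert (Hbelow : forall t p, a <= t <= b -> c <= p <= d -> f t p < m).
  { intros t p Ht Hp.
    destruct (Rle_lt_or_eq_dec (f t p) m) as [Hlt | Heq];
      [apply Hub; now exists t, p | exact Hlt |].
    exfalso; apply Hnomax. exists t, p. repeat split; try tauto.
    intros t' p' Ht' Hp'. rewrite Heq. apply Hub. now exists t', p'. }
  assert (Hnbhd : forall t p, exists r : posreal, a <= t <= b -> c <= p <= d ->
     r <= m - f t p /\ forall t' p', a <= t' <= b -> c <= p' <= d ->
       Rabs (t' - t) < r -> Rabs (p' - p) < r -> f t' p' < (f t p + m) / 2).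
  { intros t p. destruct (classic (a <= t <= b /\ c <= p <= d)) as [[Ht Hp] | Hout].
    - pose proof (Hbelow t p Ht Hp).
      destruct (Hf t p Ht ((m - f t p) / 2) ltac:(lra)) as [r [Hr Hfr]].
      assert (Hr' : 0 < Rmin r (m - f t p)) by (apply Rmin_pos; lra).
      exists (mkposreal _ Hr'); simpl; intros _ _. split; [apply Rmin_r |].
      intros t' p' Ht' Hp' Hdt Hdp. pose proof (Rmin_l r (m - f t p)).
      specialize (Hfr t' p' Ht' ltac:(lra) ltac:(lra)). apply Rabs_def2 in Hfr. lra.
    - exists (mkposreal 1 Rlt_0_1). intros Ht Hp. exfalso; auto. }
  set (r := fun t p => proj1_sig (constructive_indefinite_description _ (Hnbhd t p))).
  destruct (compactness_value_2d a b c d r) as [dd Hdd].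
  assert (Hgap : forall t p, a <= t <= b -> c <= p <= d -> f t p <= m - dd / 2).
  { intros t p Ht Hp. apply NNPP; intros Hn. apply (Hdd t p Ht Hp).
    intros (u & v & Hu & Hv & Hdt & Hdp & Hddr). apply Hn.
    destruct (proj2_sig (constructive_indefinite_description _ (Hnbhd u v)) Hu Hv)
      as [Hrgap Hrf].
    specialize (Hrf t p Ht Hp Hdt Hdp). fold (r u v) in Hrgap. lra. }
  assert (m <= m - dd / 2) by (apply Hlub; intros y (t & p & Ht & Hp & ->); auto).
  pose proof (cond_pos dd). lra.
Qed.

Lemma band_attains_max_of_coercive (f : R -> R -> R) a b M eps :
  a <= b -> 0 < eps -> continuous_on_band a b f ->
  (forall t p, a <= t <= b -> f t p <= M - eps * p ^ 2) ->
  exists ts ps, a <= ts <= b /\ forall t p, a <= t <= b -> f t p <= f ts ps.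
Proof.
  intros Hab Heps Hf Hcoer.
  set (r := 1 + Rabs ((M - f a 0) / eps)).
  destruct (band_rectangle_attains_max f a b (- r) r Hab) as (ts & ps & Hts & Hps & Hmax);
    [unfold r; pose proof (Rabs_pos ((M - f a 0) / eps)); lra | exact Hf | |].
  { exists M. intros t p Ht _. specialize (Hcoer t p Ht). pose proof (pow2_ge_0 p). nra. }
  exists ts, ps. split; [exact Hts |]. intros t p Ht.
  destruct (Rle_or_lt (Rabs p) r) as [Hp | Hp];
    [apply Hmax; [exact Ht | apply Rabs_le_between; exact Hp] |].
  (* Outside [-r, r] the penalty pushes [f] below its value at [(a, 0)]. *)
  assert (Hfa0 : f a 0 <= f ts ps)
    by (apply Hmax; [lra | unfold r; pose proof (Rabs_pos ((M - f a 0) / eps)); lra]).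
  assert (Hsq : (M - f a 0) / eps < p ^ 2).
  { pose proof (Rle_abs ((M - f a 0) / eps)).
    rewrite <- pow2_abs. unfold r in Hp. nra. }
  assert (M - f a 0 < eps * p ^ 2).
  { apply (Rmult_lt_compat_l eps) in Hsq; [| exact Heps].
    replace (eps * ((M - f a 0) / eps)) with (M - f a 0) in Hsq by (field; lra). exact Hsq. }
  specialize (Hcoer t p Ht). lra.
Qed.

Section MaximumPrinciple.

Variables (T sigma alpha : R) (W Wt Wp Wpp : R -> R -> R).
Hypothesis Halpha : 0 <= alpha.
Hypothesis HWt : forall t p, 0 < t < T -> is_derive (fun s => W s p) t (Wt t p).
Hypothesis HWp : forall t p, 0 <= t <= T -> is_derive (fun q => W t q) p (Wp t p).
Hypothesis HWpp : forall t p, 0 <= t <= T -> is_derive (fun q => Wp t q) p (Wpp t p).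
Hypothesis HWcont : continuous_on_band 0 T W.
Hypothesis HWT : forall p, W T p <= 0.
Hypothesis HWsub :
  forall t p, 0 < t < T -> 0 <= Wt t p + / 2 * sigma ^ 2 * Wpp t p + alpha * Wp t p ^ 2.

Lemma positive_in_open_interval t p : 0 <= t <= T -> 0 < W t p ->
  exists t0, 0 < t0 < T /\ 0 < W t0 p.
Proof.
  intros Ht Hpos.
  destruct (Req_dec t T) as [-> | HtT]; [specialize (HWT p); lra |].
  destruct (Req_dec t 0) as [-> | Ht0]; [| exists t; split; [lra | exact Hpos]].
  destruct (HWcont 0 p Ht (W 0 p / 2) ltac:(lra)) as [d [Hd Hdelta]].
  set (t0 := Rmin (d / 2) (T / 2)).
  assert (Ht0' : 0 < t0 < d /\ t0 < T).
  { pose proof (Rmin_l (d / 2) (T / 2)); pose proof (Rmin_r (d / 2) (T / 2)).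
    assert (0 < t0) by (apply Rmin_pos; lra). unfold t0 in *; lra. }
  exists t0; split; [lra |].
  specialize (Hdelta t0 p ltac:(lra) ltac:(rewrite Rminus_0_r, Rabs_pos_eq; lra)
                ltac:(rewrite Rminus_diag, Rabs_R0; lra)).
  apply Rabs_def2 in Hdelta. lra.
Qed.

Definition penalized (eps B t q : R) : R := W t q - (B * (T - t) + eps * q ^ 2).

(* At a maximum of the penalized function in [[ts, T] x R] the derivatives of
   [W] are those of the penalty, up to the one-sided inequalities. *)
Lemma penalized_max_bound eps B ts ps : 0 < ts < T ->
  (forall t q, ts <= t <= T -> penalized eps B t q <= penalized eps B ts ps) ->
  Wt ts ps + / 2 * sigma ^ 2 * Wpp ts ps + alpha * Wp ts ps ^ 2
    <= - B + eps * sigma ^ 2 + 4 * alpha * eps ^ 2 * ps ^ 2.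
Proof.
  intros Hts Hmax.
  assert (Hdq : forall q, is_derive (fun y => penalized eps B ts y) q (Wp ts q - 2 * eps * q)).
  { intros q. unfold penalized.
    apply (is_derive_minus (fun y => W ts y)); [apply HWp; lra | auto_derive; [easy | ring]]. }
  assert (Hdqq : is_derive (fun y => Wp ts y - 2 * eps * y) ps (Wpp ts ps - 2 * eps)).
  { apply (is_derive_minus (fun y => Wp ts y)); [apply HWpp; lra | auto_derive; [easy | ring]]. }
  assert (Hdt : is_derive (fun s => penalized eps B s ps) ts (Wt ts ps + B)).
  { unfold penalized.
    replace (Wt ts ps + B) with (Wt ts ps - - B) by ring.
    apply (is_derive_minus (fun s => W s ps)); [apply HWt; lra | auto_derive; [easy | ring]]. }
  assert (Hmaxq : forall q, penalized eps B ts q <= penalized eps B ts ps)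
    by (intros q; apply Hmax; lra).
  assert (Hgrad : Wp ts ps = 2 * eps * ps).
  { pose proof (is_derive_eq0_of_max _ ps _ (Hdq ps) Hmaxq). lra. }
  assert (Hhess : Wpp ts ps <= 2 * eps).
  { pose proof (is_derive2_le0_of_max _ _ ps _ Hdq Hdqq Hmaxq). lra. }
  assert (Htime : Wt ts ps <= - B).
  { enough (Wt ts ps + B <= 0) by lra.
    apply (is_derive_le0_of_right_max _ ts _ (T - ts) Hdt ltac:(lra)).
    intros h Hh. apply Hmax; lra. }
  rewrite Hgrad.
  assert (/ 2 * sigma ^ 2 * Wpp ts ps <= / 2 * sigma ^ 2 * (2 * eps))
    by (apply Rmult_le_compat_l; [pose proof (pow2_ge_0 sigma); lra | exact Hhess]).
  nra.
Qed.

Lemma small_factor K L c d : 0 <= K -> 0 <= L -> 0 < c -> 0 < d ->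
  exists eps, 0 < eps /\ eps * K < c /\ eps * L < d.
Proof.
  intros HK HL Hc Hd.
  pose proof (Rmin_l c d); pose proof (Rmin_r c d).
  set (m := Rmin c d) in *. assert (Hm : 0 < m) by (apply Rmin_pos; lra).
  exists (m / (K + L + 1)).
  assert (Hq : 0 < m / (K + L + 1)) by (apply Rdiv_lt_0_compat; lra).
  assert (HqKL : m / (K + L + 1) * (K + L + 1) = m) by (field; lra).
  set (q := m / (K + L + 1)) in *.
  assert (0 < q * (L + 1)) by (apply Rmult_lt_0_compat; lra).
  assert (0 < q * (K + 1)) by (apply Rmult_lt_0_compat; lra).
  repeat split; [exact Hq | nra | nra].
Qed.

Lemma subsolution_nonpos :
  (exists M, forall t p, 0 <= t <= T -> W t p <= M) ->
  forall t p, 0 <= t <= T -> W t p <= 0.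
Proof.
  intros [M HM] t p Ht. apply Rnot_lt_le; intros Hpos.
  destruct (positive_in_open_interval t p Ht Hpos) as [t0 [Ht0 Hw0]].
  set (w0 := W t0 p) in Hw0.
  assert (HM0 : w0 <= M) by (apply HM; lra).
  set (eta := w0 / (2 * T)).
  assert (Heta : 0 < eta /\ eta * T = w0 / 2)
    by (split; [apply Rdiv_lt_0_compat | unfold eta; field]; lra).
  (* [eps] must keep the penalized function positive at [(t0, p)] and the
     quadratic gradient term below [eta] at a maximum. *)
  destruct (small_factor (p ^ 2 + sigma ^ 2 * T) (4 * alpha * M) (w0 / 2) eta)
    as [eps [Heps [Hz0 Heta_small]]];
    [pose proof (pow2_ge_0 p); pose proof (pow2_ge_0 sigma); nra | nra | lra | lra |].
  set (B := eps * sigma ^ 2 + eta).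
  assert (HB : 0 <= B) by (unfold B; pose proof (pow2_ge_0 sigma); nra).
  assert (Hzpos : 0 < penalized eps B t0 p).
  { unfold penalized, B; fold w0.
    assert (0 <= (eps * sigma ^ 2 + eta) * t0)
      by (apply Rmult_le_pos; [pose proof (pow2_ge_0 sigma); nra | lra]).
    nra. }
  destruct (band_attains_max_of_coercive (penalized eps B) t0 T M eps ltac:(lra) Heps)
    as (ts & ps & Hts & Hmax).
  { apply (continuous_on_band_plus t0 T W (fun s q => - (B * (T - s) + eps * q ^ 2))).
    - apply (continuous_on_band_sub 0 T); [lra | lra | exact HWcont].
    - apply continuous_on_band_opp, continuous_on_band_sep;
        intros; apply (ex_derive_continuous (K := R_AbsRing) (V := R_NormedModule));
        auto_derive; easy. }
  { intros s q Hs. unfold penalized. specialize (HM s q ltac:(lra)).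
    assert (0 <= B * (T - s)) by (apply Rmult_le_pos; lra). lra. }
  assert (Hzts : 0 < penalized eps B ts ps) by (specialize (Hmax t0 p ltac:(lra)); lra).
  assert (HtsT : ts < T).
  { destruct (Rle_lt_or_eq_dec ts T ltac:(lra)) as [| ->]; [assumption |].
    unfold penalized in Hzts. specialize (HWT ps). pose proof (pow2_ge_0 ps). nra. }
  assert (Hps : eps * ps ^ 2 < M).
  { unfold penalized in Hzts. specialize (HM ts ps ltac:(lra)).
    assert (0 <= B * (T - ts)) by (apply Rmult_le_pos; lra). lra. }
  pose proof (penalized_max_bound eps B ts ps ltac:(lra)
                (fun s q Hs => Hmax s q ltac:(lra))) as Hbound.
  specialize (HWsub ts ps ltac:(lra)).
  assert (alpha * eps * (eps * ps ^ 2) <= alpha * eps * M)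
    by (apply Rmult_le_compat_l; [nra | lra]).
  unfold B in Hbound. nra.
Qed.

End MaximumPrinciple.

Lemma continuous_on_band_sumN N a b (f : nat -> R -> R -> R) :
  (forall i, (i < N)%nat -> continuous_on_band a b (f i)) ->
  continuous_on_band a b (fun t p => sumN N (fun i => f i t p)).
Proof.
  induction N as [|N IH]; intros Hf; simpl.
  - intros t p _ eps Heps. exists 1; split; [lra |].
    intros; rewrite Rminus_diag, Rabs_R0; exact Heps.
  - apply (continuous_on_band_plus a b (fun t p => sumN N (fun i => f i t p)) (f N)).
    + apply IH; intros; apply Hf; lia.
    + apply Hf; lia.
Qed.

Lemma bounded_on_strip_sumN N T (f : nat -> R -> R -> R) :
  (forall i, (i < N)%nat -> bounded_on_strip T (f i)) ->
  bounded_on_strip T (fun t p => sumN N (fun i => f i t p)).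
Proof.
  induction N as [|N IH]; intros Hf; simpl.
  - exists 0. intros; rewrite Rabs_R0; lra.
  - destruct (IH ltac:(intros; apply Hf; lia)) as [M1 H1].
    destruct (Hf N ltac:(lia)) as [M2 H2].
    exists (M1 + M2). intros t p Ht.
    eapply Rle_trans; [apply Rabs_triang |]. specialize (H1 t p Ht); specialize (H2 t p Ht). lra.
Qed.

Lemma hjb_solution_vanishes T sigma alpha (W Wt Wp Wpp : R -> R -> R) :
  0 <= alpha ->
  (forall t p, 0 < t < T -> is_derive (fun s => W s p) t (Wt t p)) ->
  (forall t p, 0 <= t <= T -> is_derive (fun q => W t q) p (Wp t p)) ->
  (forall t p, 0 <= t <= T -> is_derive (fun q => Wp t q) p (Wpp t p)) ->
  continuous_on_band 0 T W -> bounded_on_strip T W ->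
  (forall p, W T p = 0) ->
  (forall t p, 0 < t < T -> Wt t p + / 2 * sigma ^ 2 * Wpp t p + alpha * Wp t p ^ 2 = 0) ->
  forall t p, 0 <= t <= T -> W t p = 0.
Proof.
  intros Halpha HWt HWp HWpp HWcont [M HM] HWT Hhjb t p Ht.
  assert (Hle : W t p <= 0).
  { apply (subsolution_nonpos T sigma alpha W Wt Wp Wpp); auto.
    - intros q; rewrite HWT; lra.
    - intros s q Hs; rewrite Hhjb; lra.
    - exists M. intros s q Hs. specialize (HM s q Hs). apply Rabs_le_between in HM. lra. }
  (* [- W] is a subsolution too, since [alpha * Wp ^ 2 >= 0]. *)
  assert (Hge : - W t p <= 0).
  { apply (subsolution_nonpos T sigma alpha (fun s q => - W s q) (fun s q => - Wt s q)
             (fun s q => - Wp s q) (fun s q => - Wpp s q)); auto.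
    - intros s q Hs. exact (is_derive_opp _ _ _ (HWt s q Hs)).
    - intros s q Hs. exact (is_derive_opp _ _ _ (HWp s q Hs)).
    - intros s q Hs. exact (is_derive_opp _ _ _ (HWpp s q Hs)).
    - apply continuous_on_band_opp, HWcont.
    - intros q; rewrite HWT; lra.
    - intros s q Hs. specialize (Hhjb s q Hs).
      assert (0 <= alpha * Wp s q ^ 2) by (apply Rmult_le_pos; [exact Halpha | apply pow2_ge_0]).
      nra.
    - exists M. intros s q Hs. specialize (HM s q Hs). apply Rabs_le_between in HM. lra. }
  lra.
Qed.

Lemma Xstar_eq N lam kap vp t p : kap <> 0 ->
  Xstar N lam kap vp t p = lam / (kap * (INR N + 1)) * sumN N (fun i => vp i t p).
Proof.
  intros Hkap. unfold Xstar, Xdot.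
  rewrite sumN_scal_l, sumN_minus, sumN_const.
  assert (0 < INR N + 1) by (pose proof (pos_INR N); lra).
  field; lra.
Qed.

Lemma sum_classical_solution_hjb N T sigma lam kap H v vt vp vpp t p : 0 < kap ->
  classical_solution N T sigma lam kap H v vt vp vpp -> 0 < t < T ->
  sumN N (fun i => vt i t p) + / 2 * sigma ^ 2 * sumN N (fun i => vpp i t p)
    + lam ^ 2 * INR N / (kap * (INR N + 1) ^ 2) * sumN N (fun i => vp i t p) ^ 2 = 0.
Proof.
  intros Hkap Hsol Ht.
  assert (Hsum : sumN N (fun j => vt j t p + / 2 * sigma ^ 2 * vpp j t p
           + lam * Xstar N lam kap vp t p * vp j t p
           - kap * Xdot N lam kap vp j t p * Xstar N lam kap vp t p) = 0).
  { rewrite <- (Rmult_0_r (INR N)), <- sumN_const. apply sumN_ext.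
    intros j Hj. symmetry. apply (Hsol j Hj), Ht. }
  rewrite sumN_minus, !sumN_plus, !sumN_scal_l, sumN_scal_r, sumN_scal_l in Hsum.
  fold (Xstar N lam kap vp t p) in Hsum.
  rewrite Xstar_eq in Hsum by lra.
  rewrite <- Hsum.
  assert (0 < INR N + 1) by (pose proof (pos_INR N); lra).
  field; lra.
Qed.

Theorem mainTheorem5 (N : nat) (T sigma lam kap : R)
    (H : nat -> R -> R) (v vt vp vpp : nat -> R -> R -> R) :
  (1 <= N)%nat -> 0 < T -> 0 < sigma -> 0 < lam -> 0 < kap ->
  (forall j, (j < N)%nat -> C2b (H j)) ->
  (forall p, sumN N (fun i => H i p) = 0) ->
  classical_solution N T sigma lam kap H v vt vp vpp ->
  forall t p, 0 <= t <= T -> Xstar N lam kap vp t p = 0.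
Proof.
  intros _ _ _ _ Hkap _ HHsum Hsol t p Ht.
  set (S := fun s q => sumN N (fun i => v i s q)).
  set (Sp := fun s q => sumN N (fun i => vp i s q)).
  assert (HS0 : forall s q, 0 <= s <= T -> S s q = 0).
  { apply (hjb_solution_vanishes T sigma (lam ^ 2 * INR N / (kap * (INR N + 1) ^ 2)) S
             (fun s q => sumN N (fun i => vt i s q)) Sp (fun s q => sumN N (fun i => vpp i s q))).
    - pose proof (pos_INR N). apply Rmult_le_pos; [nra |].
      apply Rlt_le, Rinv_0_lt_compat, Rmult_lt_0_compat; [exact Hkap | apply pow_lt; lra].
    - intros s q Hs. apply is_derive_sumN. intros i Hi. apply (Hsol i Hi), Hs.
    - intros s q Hs. apply is_derive_sumN. intros i Hi. apply (Hsol i Hi), Hs.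
    - intros s q Hs. apply is_derive_sumN. intros i Hi. apply (Hsol i Hi), Hs.
    - apply continuous_on_band_sumN. intros i Hi. apply (Hsol i Hi).
    - apply bounded_on_strip_sumN. intros i Hi. apply (Hsol i Hi).
    - intros q. unfold S. rewrite <- (HHsum q). apply sumN_ext. intros i Hi. apply (Hsol i Hi).
    - intros s q Hs.
      exact (sum_classical_solution_hjb N T sigma lam kap H v vt vp vpp s q Hkap Hsol Hs). }
  assert (HSp : Sp t p = 0).
  { assert (HdS : is_derive (fun q => S t q) p (Sp t p)).
    { apply is_derive_sumN. intros i Hi. apply (Hsol i Hi), Ht. }
    rewrite <- (is_derive_unique _ _ _ HdS), (Derive_ext _ (fun _ => 0)) by (intros; apply HS0, Ht).
    apply Derive_const. }
  rewrite Xstar_eq by lra. fold (Sp t p). rewrite HSp. ring.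
Qed.
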